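(* In the 2-sided error regime, there exist moldgraphs (with arbitrarily large number $m$ of edges) on which any algorithm requires $\Omega(m\log m)$ queries to discover a realized spanning tree with constant failure probability.
   Context: Problem (graph connectivity with noisy queries): a graph $G=(V,E)$ (possibly with parallel edges), the moldgraph, with $m$ edges is given. An adversary selects an arbitrary connected spanning subgraph of $G$ to be realized. The algorithm may query an oracle on any edge $e$ (``Is $e$ realized?'') and receives ``Yes''/``No''; each query costs $1$, and answers to distinct queries (including repeated queries of the same edge) are independent. Goal: output a spanning tree of $G$ all of whose edges are realized. In the 2-sided error regime, each answer is wrong with a constant probability $p<1/2$. *)

From HB Require Import structures.
From mathcomp Require Import all_boot all_order all_algebra.
From mathcomp Require Import reals exp.
Set Implicit Arguments. Unset Strict Implicit. Unset Printing Implicit Defensive.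
Import Order.TTheory GRing.Theory Num.Theory.
Local Open Scope ring_scope.

(* A moldgraph is a finite multigraph: vertex type V, edge type E, and
   an endpoint map ends : E -> V * V (parallel edges allowed). *)

Definition adj (V E : finType) (ends : E -> V * V) (F : {set E}) : rel V :=
  fun x y => [exists e in F,
    (((ends e).1 == x) && ((ends e).2 == y)) || (((ends e).1 == y) && ((ends e).2 == x))].

Definition connected_sp (V E : finType) (ends : E -> V * V) (F : {set E}) : bool :=
  [forall x : V, [forall y : V, connect (adj ends F) x y]].

(* (V, F) is a forest: every edge is a bridge (no cycles, incl. loops and
   pairs of parallel edges) *)
Definition acyclic_sp (V E : finType) (ends : E -> V * V) (F : {set E}) : bool :=
  [forall e in F, ~~ connect (adj ends (F :\ e)) (ends e).1 (ends e).2].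

Definition spanning_tree (V E : finType) (ends : E -> V * V) (F : {set E}) : bool :=
  connected_sp ends F && acyclic_sp ends F.

(* Deterministic adaptive query algorithm: a decision tree that queries an
   edge and branches on the (noisy) answer, finally outputting an edge set. *)
Inductive dtree (E : finType) : Type :=
| Leaf of {set E}
| Query of E & (bool -> dtree E).

Fixpoint depth (E : finType) (t : dtree E) : nat :=
  match t with
  | Leaf _ => 0
  | Query _ k => (maxn (depth (k true)) (depth (k false))).+1
  end.

(* Probability that tree t outputs a set satisfying [good], when the realized
   edge set is S and each answer is independently wrong with probability p
   (2-sided error). *)
Fixpoint succ_prob (R : realType) (p : R) (E : finType) (S : {set E})
    (good : {set E} -> bool) (t : dtree E) : R :=
  match t with
  | Leaf T => if good T then 1 else 0
  | Query e k =>
      (1 - p) * succ_prob p S good (k (e \in S))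
      + p * succ_prob p S good (k (~~ (e \in S)))
  end.

(* A randomized algorithm is a finite probability distribution over
   deterministic decision trees (list of (weight, tree)). *)
Definition is_distr (R : realType) (E : finType) (A : seq (R * dtree E)) : Prop :=
  all (fun x => 0 <= x.1) A /\ \sum_(x <- A) x.1 = 1.

Definition alg_succ (R : realType) (p : R) (V E : finType) (ends : E -> V * V)
    (S : {set E}) (A : seq (R * dtree E)) : R :=
  \sum_(x <- A) x.1 * succ_prob p S (fun T => spanning_tree ends T && (T \subset S)) x.2.

From HB Require Import structures.
From mathcomp Require Import all_boot all_order all_algebra.
From mathcomp Require Import reals exp.
From mathcomp Require Import zify ring lra.
Set Implicit Arguments. Unset Strict Implicit. Unset Printing Implicit Defensive.
Import Order.TTheory GRing.Theory Num.Theory.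
Local Open Scope ring_scope.

(* The hard moldgraph is a path on k + 1 vertices with every edge doubled; the
   adversary realizes exactly one edge of each parallel pair, so realizations are
   indexed by x : 'I_k -> bool, and a realized spanning tree determines x.
   Run a deterministic decision tree against the uniform prior on x and follow the
   unnormalized posterior, a product over positions. A query at position j changes
   the odds between the two values of x j by a factor at most (1 - p)/p, so after
   n j queries there these odds are still at least r ^ n j with r = p/(1 - p). At a
   leaf the only realization the output can be correct for then carries at most a
   1/(1 + sum_j r ^ n j) share of the mass. If the tree has depth
   D < c 2k ln(2k) with c = -1/(8 ln r), Markov's inequality gives more than k/2
   positions with n j <= 2D/k, and r ^ (2D/k) >= 1/sqrt(2k), so that sum is at
   least 1: each shallow tree is correct on at most half of the realizations, and
   so is every mixture of shallow trees, whereas success probability 3/4 is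
   required. *)

Lemma ler1D_sum_prod (R : realDomainType) (I : Type) (s : seq I) (a : I -> R) :
  (forall i, 0 <= a i) -> 1 + \sum_(i <- s) a i <= \prod_(i <- s) (1 + a i).
Proof.
move=> a_ge0; elim: s => [|i s IHs]; first by rewrite !big_nil addr0.
rewrite !big_cons; apply: le_trans (ler_wpM2l (addr_ge0 ler01 (a_ge0 i)) IHs).
have := a_ge0 i; have : 0 <= \sum_(j <- s) a j by exact: sumr_ge0.
nra.
Qed.

Lemma markov_count k (n : 'I_k -> nat) (D : nat) :
  (0 < k)%N -> (\sum_j n j <= D)%N ->
  (k < 2 * #|[pred j | n j <= (2 * D) %/ k]|)%N.
Proof.
move=> k_gt0 sum_le; set t := ((2 * D) %/ k)%N; set A := [pred j | _].
have large_n : (#|[predC A]| * t.+1 <= D)%N.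
  apply: leq_trans sum_le; rewrite -sum_nat_const (bigID A predT) /=.
  by apply: leq_trans (leq_addl _ _); apply: leq_sum => j; rewrite !inE -ltnNge.
have few_large : (2 * #|[predC A]| < k)%N.
  rewrite -(ltn_pmul2r (ltn0Sn t)) [(k * _)%N]mulnC.
  apply: leq_ltn_trans (ltn_ceil (2 * D) k_gt0).
  by rewrite -mulnA leq_mul2l large_n orbT.
move: few_large (cardC A); rewrite card_ord; move: #|[predC A]| #|A| => C a; lia.
Qed.

Lemma card_le_sum_exprn (R : realDomainType) k (r : R) (n : 'I_k -> nat) (t : nat) :
  0 <= r -> r <= 1 -> #|[pred j | (n j <= t)%N]|%:R * r ^+ t <= \sum_j r ^+ n j.
Proof.
move=> r_ge0 r_le1; rewrite (bigID [pred j | (n j <= t)%N]) /= -[leLHS]addr0.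
rewrite lerD ?sumr_ge0 // => [|j _]; last exact: exprn_ge0.
rewrite mulr_natl -sumr_const; apply: ler_sum => j small_j.
by rewrite ler_wiXn2l ?r_ge0.
Qed.

Lemma one_le_mul_exprn (R : realType) (a r : R) (t : nat) :
  0 < a -> 0 < r -> 0 <= ln a + t%:R * ln r -> 1 <= a * r ^+ t.
Proof.
move=> a_gt0 r_gt0 ln_ge0.
have prod_pos : a * r ^+ t \in Num.pos by rewrite posrE mulr_gt0 ?exprn_gt0.
rewrite -(lnK prod_pos) lnM ?posrE ?exprn_gt0 // lnXn // -mulr_natl.
by apply: le_trans (expR_ge1Dx _); rewrite lerDl.
Qed.

Lemma one_le_card_exprn (R : realType) (r c : R) (k D K : nat) :
  0 < r -> r < 1 -> c * ln r = - 8^-1 ->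
  (8 <= k)%N -> (k < 2 * K)%N -> D%:R < c * (2 * k)%N%:R * ln (2 * k)%N%:R ->
  1 <= K%:R * r ^+ ((2 * D) %/ k).
Proof.
move=> r_gt0 r_lt1 c_ln_r k_ge8 kK D_lt.
have ln_r_lt0 : ln r < 0 by rewrite ln_lt0 // r_gt0.
have K_sq : (2 * k <= K ^ 2)%N by rewrite -mulnn; nia.
have K_gt0 : (0 < K)%N by lia.
have k_gt0 : 0 < k%:R :> R by rewrite ltr0n (leq_trans _ k_ge8).
set t := ((2 * D) %/ k)%N; set L := ln ((2 * k)%N%:R : R).
have t_lt : t%:R < 4 * c * L.
  have tk : t%:R * k%:R <= 2 * D%:R :> R by rewrite -natrM -(natrM _ 2) ler_nat leq_divM.
  by rewrite -(ltr_pM2r k_gt0); move: D_lt; rewrite -/L natrM; lra.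
have t_ln_r : - (L / 2) <= t%:R * ln r.
  have : 4 * c * L * ln r <= t%:R * ln r by rewrite ler_wnM2r // ltW.
  have : 4 * c * L * ln r = 4 * L * (c * ln r) by ring.
  rewrite c_ln_r; lra.
have L_le : L <= 2 * ln K%:R.
  rewrite (_ : 2 * ln K%:R = ln (K%:R ^+ 2)); last by rewrite lnXn ?ltr0n ?mulr_natl.
  by rewrite /L -natrX ler_ln ?posrE ?ltr0n ?ler_nat ?expn_gt0 ?K_gt0 // muln_gt0 (leq_trans _ k_ge8).
by apply: one_le_mul_exprn; rewrite ?ltr0n //; lra.
Qed.

Lemma distr_average_le (R : realType) (E : finType) (A : seq (R * dtree E))
    (F : dtree E -> R) (M : R) :
  is_distr A ->
  (forall i, (i < size A)%N -> 0 < (nth (0, Leaf set0) A i).1 ->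
     F (nth (0, Leaf set0) A i).2 <= M) ->
  \sum_(y <- A) y.1 * F y.2 <= M.
Proof.
move=> [/(all_nthP (0, Leaf set0)) w_ge0 w_sum] F_le.
rewrite -[M]mul1r -w_sum mulr_suml (big_nth (0, Leaf set0)).
rewrite [leRHS](big_nth (0, Leaf set0)) !big_mkord; apply: ler_sum => i _.
have := w_ge0 i (ltn_ord i); rewrite le0r => /orP[/eqP -> | w_pos]; first by rewrite !mul0r.
by rewrite ler_pM2l // F_le.
Qed.

Lemma adj_sym (V E : finType) (ends : E -> V * V) (F : {set E}) :
  symmetric (adj ends F).
Proof.
by move=> a b; apply/existsP/existsP => -[e /andP[eF h]]; exists e; rewrite eF orbC.
Qed.

(* Position j of the doubled path carries the parallel edges (j, false) and
   (j, true) between vertices j and j + 1; [dpath_real x] realizes (j, x j). *)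
Definition dpath_ends (k : nat) (e : 'I_k * bool) : 'I_k.+1 * 'I_k.+1 :=
  (inord e.1, inord e.1.+1).

Definition dpath_real (k : nat) (x : {ffun 'I_k -> bool}) : {set 'I_k * bool} :=
  [set e | e.2 == x e.1].

Section DoubledPath.

Context {k : nat}.
Implicit Types (x y : {ffun 'I_k -> bool}) (T : {set 'I_k * bool}).

Lemma dpath_real_connected x : connected_sp (@dpath_ends k) (dpath_real x).
Proof.
have from0 (a : 'I_k.+1) : connect (adj (@dpath_ends k) (dpath_real x)) ord0 a.
  rewrite -(inord_val a); move: (ltn_ord a); rewrite ltnS.
  elim: (val a) => [|i IHi] ik; first by apply/eq_connect0/val_inj; rewrite /= inordK.
  apply: connect_trans (IHi (ltnW ik)) (connect1 _).
  apply/existsP; exists (Ordinal ik, x (Ordinal ik)).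
  by rewrite inE eqxx /dpath_ends /= !eqxx.
apply/forallP=> a; apply/forallP=> b; apply: (connect_trans _ (from0 b)).
by rewrite (sym_connect_sym (@adj_sym _ _ _ _)).
Qed.

Lemma connected_dpath_edge T (j : 'I_k) :
  connected_sp (@dpath_ends k) T -> exists b, (j, b) \in T.
Proof.
move=> /forallP /(_ ord0) /forallP /(_ (inord j.+1)) conn_0j.
apply/existsP; apply: contraT => /existsPn no_j.
have left_closed : closed (adj (@dpath_ends k) T) [pred v : 'I_k.+1 | (v <= j)%N].
  apply: intro_closed; first exact: sym_connect_sym (@adj_sym _ _ _ _).
  move=> a b /existsP[[j' b'] /andP[j'T ends_ab]].
  have j'j : nat_of_ord j' != nat_of_ord j by apply: contraNneq (no_j b') => /val_inj <-.
  case/orP: ends_ab => /andP[/eqP <- /eqP <-];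
    rewrite !inE /= !inordK ?ltnS ?(ltnW (ltn_ord j')) //.
  - by rewrite ltn_neqAle j'j.
  - exact: ltnW.
have := closed_connect left_closed conn_0j.
by rewrite !inE /= inordK ?ltnS // leq0n ltnn.
Qed.

Definition dpath_good x T := spanning_tree (@dpath_ends k) T && (T \subset dpath_real x).

Lemma dpath_good_inj x y T : dpath_good x T -> dpath_good y T -> x = y.
Proof.
move=> /andP[/andP[conn _] Tx] /andP[_ Ty]; apply/ffunP => j.
have [b jbT] := connected_dpath_edge j conn.
by move: (subsetP Tx _ jbT) (subsetP Ty _ jbT); rewrite !inE /= => /eqP <- /eqP <-.
Qed.

End DoubledPath.

Section NoisyQueryLowerBound.

Variables (R : realType) (p : R).
Hypotheses (p_gt0 : 0 < p) (p_lt_half : p < 2^-1).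

Let r := p / (1 - p).

Let q_gt0 : 0 < 1 - p. Proof. by have := p_lt_half; lra. Qed.

Let r_gt0 : 0 < r. Proof. exact: divr_gt0. Qed.

Let r_lt1 : r < 1.
Proof. by rewrite /r ltr_pdivrMr // mul1r; have := p_lt_half; lra. Qed.

Let ln_r_lt0 : ln r < 0. Proof. by rewrite ln_lt0 // r_gt0. Qed.

Let c := (-8 * ln r)^-1.

Let c_ln_r : c * ln r = - 8^-1. Proof. by rewrite /c; field; rewrite ltr0_neq0. Qed.

Lemma lower_const_gt0 : 0 < c.
Proof. by rewrite invr_gt0; have := ln_r_lt0; lra. Qed.

(* Probability of the answer [b] to the query of edge (j0, b0) when x j0 = y. *)
Definition answer_prob (b0 y b : bool) : R := if (b0 == y) == b then 1 - p else p.

Lemma answer_prob_ge0 b0 y b : 0 <= answer_prob b0 y b.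
Proof. by rewrite /answer_prob; case: ifP => _; rewrite ltW. Qed.

Lemma answer_prob_flip b0 y b : r * answer_prob b0 y b <= answer_prob b0 (~~ y) b.
Proof.
have r_q : r * (1 - p) = p by rewrite mulfVK // gt_eqF.
have r_p : r * p <= 1 - p.
  by rewrite /r mulrAC ler_pdivrMr //; have := p_gt0; have := p_lt_half; nra.
by rewrite /answer_prob; case: b0; case: y; case: b; rewrite /= ?r_q.
Qed.

Context {k : nat}.
Implicit Types (u : 'I_k -> bool -> R) (n : 'I_k -> nat) (x : {ffun 'I_k -> bool}).

Definition weight u x : R := \prod_j u j (x j).

Definition mass u : R := \sum_x weight u x.

Definition wsucc u (t : dtree ('I_k * bool)%type) : R :=
  \sum_x weight u x * succ_prob p (dpath_real x) (dpath_good x) t.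

Definition odds_bounded n u := forall j b, r ^+ n j * u j b <= u j (~~ b).

(* Bayes update of the product weight [u] by the answer [b] to the query (j0, b0). *)
Definition posterior (j0 : 'I_k) (b0 b : bool) u : 'I_k -> bool -> R :=
  fun j y => u j y * (if j == j0 then answer_prob b0 y b else 1).

Definition incr_at n (j0 : 'I_k) : 'I_k -> nat := fun j => (n j + (j == j0))%N.

Lemma weight_ge0 u x : (forall j b, 0 <= u j b) -> 0 <= weight u x.
Proof. by move=> u_ge0; apply: prodr_ge0. Qed.

Lemma mass_prod u : mass u = \prod_j (u j true + u j false).
Proof.
rewrite /mass /weight -(bigA_distr_bigA (fun j b => u j b)) /=.
by apply: eq_bigr => j _; rewrite big_bool.
Qed.

Lemma weight_le_half_mass u n x :
  (forall j b, 0 <= u j b) -> odds_bounded n u -> 1 <= \sum_j r ^+ n j ->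
  2 * weight u x <= mass u.
Proof.
move=> u_ge0 odds_u cover.
have r_pow_ge0 j : 0 <= r ^+ n j by rewrite exprn_ge0 // ltW.
have w_ge0 := weight_ge0 x u_ge0.
apply: (le_trans (y := weight u x * \prod_j (1 + r ^+ n j))).
  have := ler_wpM2l w_ge0 (ler1D_sum_prod (index_enum 'I_k) r_pow_ge0); nra.
rewrite mass_prod /weight -big_split /=; apply: ler_prod => j _.
rewrite mulr_ge0 ?addr_ge0 ?ler01 //=.
by have := odds_u j (x j); case: (x j) => /=; nra.
Qed.

Lemma wsucc_Leaf_le u T :
  (forall j b, 0 <= u j b) -> exists x, wsucc u (Leaf T) <= weight u x.
Proof.
move=> u_ge0; case: (pickP (dpath_good^~ T)) => [x good_x|no_good].
  exists x; rewrite /wsucc (bigD1 x) //= good_x mulr1 big1 ?addr0 // => y yx /=.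
  case: ifP => [good_y|_]; last by rewrite mulr0.
  by rewrite (dpath_good_inj good_y good_x) eqxx in yx.
exists [ffun=> true]; rewrite /wsucc big1 ?weight_ge0 // => y _ /=.
by rewrite no_good mulr0.
Qed.

Lemma weight_posterior j0 b0 b u x :
  weight (posterior j0 b0 b u) x = weight u x * answer_prob b0 (x j0) b.
Proof.
rewrite /weight /posterior big_split /=; congr (_ * _).
by rewrite (bigD1 j0) //= eqxx big1 ?mulr1 // => j /negbTE ->.
Qed.

Lemma wsucc_Query u j0 b0 (next : bool -> dtree ('I_k * bool)%type) :
  wsucc u (Query (j0, b0) next) =
  wsucc (posterior j0 b0 true u) (next true) + wsucc (posterior j0 b0 false u) (next false).
Proof.
rewrite /wsucc -big_split; apply: eq_bigr => x _ /=.
by rewrite !weight_posterior inE /answer_prob /=; case: (b0 == x j0) => /=; ring.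
Qed.

Lemma mass_posterior u j0 b0 :
  mass u = mass (posterior j0 b0 true u) + mass (posterior j0 b0 false u).
Proof.
rewrite /mass -big_split; apply: eq_bigr => x _ /=.
by rewrite !weight_posterior /answer_prob; case: (b0 == x j0) => /=; ring.
Qed.

Lemma posterior_ge0 u j0 b0 b :
  (forall j y, 0 <= u j y) -> forall j y, 0 <= posterior j0 b0 b u j y.
Proof.
by move=> u_ge0 j y; rewrite mulr_ge0 //; case: ifP; rewrite ?answer_prob_ge0.
Qed.

Lemma odds_bounded_posterior u n j0 b0 b :
  (forall j y, 0 <= u j y) -> odds_bounded n u ->
  odds_bounded (incr_at n j0) (posterior j0 b0 b u).
Proof.
move=> u_ge0 odds_u j y; rewrite /posterior /incr_at.
case: (eqVneq j j0) => [->|_]; last by rewrite addn0 !mulr1.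
rewrite addn1 exprSr mulrACA; apply: ler_pM; last exact: answer_prob_flip.
- by rewrite mulr_ge0 // exprn_ge0 // ltW.
- by rewrite mulr_ge0 ?answer_prob_ge0 // ltW.
- exact: odds_u.
Qed.

Lemma sum_incr_at n j0 : (\sum_j incr_at n j0 j = \sum_j n j + 1)%N.
Proof.
rewrite big_split /=; congr (_ + _)%N.
by rewrite (bigD1 j0) //= eqxx big1 ?addn0 // => j /negbTE ->.
Qed.

Lemma wsucc_le_half_mass (B : nat) :
  (forall n, (\sum_j n j <= B)%N -> 1 <= \sum_j r ^+ n j) ->
  forall t u n, (forall j b, 0 <= u j b) -> odds_bounded n u ->
  (\sum_j n j + depth t <= B)%N -> 2 * wsucc u t <= mass u.
Proof.
move=> cover; elim=> [T|[j0 b0] next IHnext] u n u_ge0 odds_u depth_le.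
  have [x /(ler_wpM2l (ler0n _ 2)) wsucc_le] := wsucc_Leaf_le T u_ge0.
  by apply: le_trans wsucc_le (weight_le_half_mass _ u_ge0 odds_u (cover _ _)); lia.
rewrite wsucc_Query (mass_posterior u j0 b0) mulrDr.
have IHb b : (depth (next b) <= maxn (depth (next true)) (depth (next false)))%N ->
    2 * wsucc (posterior j0 b0 b u) (next b) <= mass (posterior j0 b0 b u).
  move=> depth_b; apply: (IHnext b _ (incr_at n j0)).
  - exact: posterior_ge0.
  - exact: odds_bounded_posterior.
  - by rewrite sum_incr_at; move: depth_le => /=; lia.
by apply: lerD; apply: IHb; rewrite ?leq_maxl ?leq_maxr.
Qed.

Lemma sum_succ_prob_le (t : dtree ('I_k * bool)%type) :
  (8 <= k)%N -> (depth t)%:R < c * (2 * k)%N%:R * ln (2 * k)%N%:R ->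
  \sum_x succ_prob p (dpath_real x) (dpath_good x) t <= #|{: {ffun 'I_k -> bool}}|%:R / 2.
Proof.
move=> k_ge8 depth_lt.
have cover n : (\sum_j n j <= depth t)%N -> 1 <= \sum_j r ^+ n j.
  move=> sum_n; apply: le_trans (card_le_sum_exprn _ _ (ltW r_gt0) (ltW r_lt1)).
  apply: (one_le_card_exprn r_gt0 r_lt1 c_ln_r k_ge8 _ depth_lt).
  exact: markov_count (ltn_trans (isT : (0 < 7)%N) k_ge8) sum_n.
have unif_weight x : weight (fun _ _ => 1) x = 1 by rewrite /weight big1.
have wsucc_unif : wsucc (fun _ _ => 1) t = \sum_x succ_prob p (dpath_real x) (dpath_good x) t.
  by apply: eq_bigr => x _; rewrite unif_weight mul1r.
have mass_unif : mass (fun _ _ => 1) = #|{: {ffun 'I_k -> bool}}|%:R.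
  by rewrite /mass (eq_bigr (fun=> 1)) ?sumr_const.
rewrite ler_pdivlMr // mulrC -wsucc_unif -mass_unif.
apply: (wsucc_le_half_mass (n := fun _ => 0%N) cover) => [j b|j b|].
- exact: ler01.
- by rewrite expr0 mul1r.
- by rewrite big1.
Qed.

Lemma sum_dpath_alg_succ (A : seq (R * dtree ('I_k * bool)%type)) :
  \sum_(x : {ffun 'I_k -> bool}) alg_succ p (@dpath_ends k) (dpath_real x) A =
  \sum_(y <- A) y.1 * \sum_x succ_prob p (dpath_real x) (dpath_good x) y.2.
Proof. by rewrite /alg_succ exchange_big; apply: eq_bigr => y _; rewrite mulr_sumr. Qed.

Lemma dpath_deep_tree (A : seq (R * dtree ('I_k * bool)%type)) :
  (8 <= k)%N -> is_distr A ->
  (forall x, 1 - 4^-1 <= alg_succ p (@dpath_ends k) (dpath_real x) A) ->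
  exists i : 'I_(size A), 0 < (nth (0, Leaf set0) A i).1 /\
    c * (2 * k)%N%:R * ln (2 * k)%N%:R <= (depth (nth (0, Leaf set0) A i).2)%:R.
Proof.
move=> k_ge8 distr_A succ_A.
have [/existsP[i /andP[w_pos deep]]|/existsPn shallow] := boolP [exists i : 'I_(size A),
  (0 < (nth (0, Leaf set0) A i).1) &&
  (c * (2 * k)%N%:R * ln (2 * k)%N%:R <= (depth (nth (0, Leaf set0) A i).2)%:R)].
  by exists i.
have succ_ge : \sum_(x : {ffun 'I_k -> bool}) (1 - 4^-1) <=
    \sum_x alg_succ p (@dpath_ends k) (dpath_real x) A by exact: ler_sum.
have avg_le : \sum_(y <- A) y.1 * \sum_x succ_prob p (dpath_real x) (dpath_good x) y.2
    <= #|{: {ffun 'I_k -> bool}}|%:R / 2.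
  apply: (distr_average_le (F := fun t => \sum_x succ_prob p (dpath_real x) (dpath_good x) t))
    => // i i_lt w_pos.
  apply: sum_succ_prob_le k_ge8 _.
  by move: (shallow (Ordinal i_lt)); rewrite /= w_pos /= -ltNge.
have X_gt0 : 0 < #|{: {ffun 'I_k -> bool}}|%:R :> R.
  by rewrite ltr0n; apply/card_gt0P; exists [ffun=> true].
move: succ_ge; rewrite sumr_const sum_dpath_alg_succ -mulr_natr; lra.
Qed.

End NoisyQueryLowerBound.

Theorem lemma3 (R : realType) (p : R) :
  0 < p < 2^-1 ->
  exists (delta c : R), 0 < delta /\ 0 < c /\
    forall N : nat, exists (V E : finType) (ends : E -> V * V),
      (N <= #|E|)%N /\ (exists S : {set E}, connected_sp ends S) /\
      forall A : seq (R * dtree E),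
        is_distr A ->
        (forall S : {set E}, connected_sp ends S -> 1 - delta <= alg_succ p ends S A) ->
        exists2 i : nat, (i < size A)%N & let x := nth (0, Leaf set0) A i in 0 < x.1 /\
          c * (#|E|%:R) * ln (#|E|%:R) <= (depth x.2)%:R.
Proof.
move=> /andP[p_gt0 p_lt_half].
exists 4^-1, (-8 * ln (p / (1 - p)))^-1; split; first by rewrite invr_gt0.
split; first exact: lower_const_gt0.
move=> N; pose k := maxn N 8; have k_ge8 : (8 <= k)%N := leq_maxr N 8.
have card_E : #|{: ('I_k * bool)%type}| = (2 * k)%N.
  by rewrite card_prod card_ord card_bool mulnC.
exists 'I_k.+1, ('I_k * bool)%type, (@dpath_ends k); rewrite card_E.
split; first by rewrite -(mul1n N) leq_mul // leq_maxl.
split; first by exists (dpath_real [ffun=> true]); exact: dpath_real_connected.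
move=> A distr_A succ_A.
have [i [w_pos deep]] := dpath_deep_tree p_gt0 p_lt_half k_ge8 distr_A
  (fun x => succ_A _ (dpath_real_connected x)).
by exists i.
Qed.
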